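(* Let $X$ and $Y$ be real Banach spaces and let $Z$ be a metric linear space (topological vector space) equipped with a translation-invariant metric $d_Z$. Suppose $X$ and $Y$ are linearly and isometrically embedded into $Z$ (so $d_Z(x_1,x_2)=\|x_1-x_2\|_X$ on $X$ and similarly on $Y$). Then $d_K(X,Y)\le d_Z(B_X,B_Y)$, where $d_Z(B_X,B_Y)$ is the Hausdorff distance in $(Z,d_Z)$ between the closed unit balls.
   Context: The Kadets distance $d_K(X,Y)$ is the infimum, over all Banach spaces $W$ and linear isometric embeddings $U:X\to W$, $V:Y\to W$, of the Hausdorff distance in $W$ between $UB_X$ and $VB_Y$. *)

From HB Require Import structures.
From mathcomp Require Import all_boot all_order all_algebra.
From mathcomp Require Import all_classical all_reals all_analysis.
Set Implicit Arguments. Unset Strict Implicit. Unset Printing Implicit Defensive.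
Import Order.TTheory GRing.Theory Num.Theory.
Import numFieldNormedType.Exports.
Local Open Scope classical_set_scope.
Local Open Scope ring_scope.

Definition unit_ball (R : realType) (X : normedModType R) : set X :=
  [set x | `|x| <= 1].
Arguments unit_ball {R} X.

Definition hausdorff (R : realType) (T : Type) (d : T -> T -> R)
    (A B : set T) : \bar R :=
  maxe (ereal_sup [set ereal_inf [set (d a b)%:E | b in B] | a in A])
       (ereal_sup [set ereal_inf [set (d a b)%:E | a in A] | b in B]).

Definition lin_isometry (R : realType) (X W : normedModType R) (U : X -> W) :=
  (forall (a : R) (x y : X), U (a *: x + y) = a *: U x + U y) /\
  (forall x : X, `|U x| = `|x|).

Definition kadets_dist (R : realType) (X Y : completeNormedModType R) : \bar R :=
  ereal_inf [set h | exists (W : completeNormedModType R) (U : X -> W) (V : Y -> W),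
     lin_isometry U /\ lin_isometry V /\
     h = hausdorff (fun w1 w2 : W => `|w1 - w2|) (U @` unit_ball X) (V @` unit_ball Y)].

(* A metric linear space: a real vector space Z with a metric d that is
   translation invariant and for which scalar multiplication R x Z -> Z is
   (jointly) continuous (addition is then automatically continuous). *)
Definition metric_linear_space (R : realType) (Z : lmodType R) (d : Z -> Z -> R) :=
  [/\ (forall x y, d x y = 0 <-> x = y),
      (forall x y, d x y = d y x),
      (forall x y z, d x z <= d x y + d y z),
      (forall x y z, d (x + z) (y + z) = d x y) &
      (forall (a : R) (x : Z) (eps : R), 0 < eps ->
         exists2 delta : R, 0 < delta &
           forall (b : R) (y : Z), `|b - a| < delta -> d y x < delta ->
             d (b *: y) (a *: x) < eps)].

Definition lin_isometric_into (R : realType) (X : normedModType R) (Z : lmodType R)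
    (d : Z -> Z -> R) (J : X -> Z) :=
  (forall (a : R) (x y : X), J (a *: x + y) = a *: J x + J y) /\
  (forall x1 x2 : X, d (J x1) (J x2) = `|x1 - x2|).

(* Put on X * Y the F-norm g (x, y) = d (JX x + JY y, 0).  It is subadditive and
   even but not homogeneous, so replace it by its homogenization
   p v = inf_{t > 0} g (t v) / t, which is also the limit of g (t v) / t as
   t -> +oo; this makes p a seminorm with p (x, 0) = |x|, p (0, y) = |y| and
   p (a, - b) <= d (JX a, JY b).  For 0 < delta <= min (e, 1), the norm
   max (p v, delta max (|v.1|, |v.2|)) is complete, x |-> (x, 0) and
   y |-> (0, y) are linear isometries, and |(a, 0) - (0, b)| <= d (JX a, JY b) + e
   on the unit balls, so d_K (X, Y) <= d_Z (B_X, B_Y) + e. *)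

From HB Require Import structures.
From mathcomp Require Import all_boot all_order all_algebra.
From mathcomp Require Import all_classical all_reals all_analysis.
From mathcomp Require Import ring lra.
Set Implicit Arguments. Unset Strict Implicit. Unset Printing Implicit Defensive.
Import Order.TTheory GRing.Theory Num.Theory.
Local Open Scope classical_set_scope.
Local Open Scope ring_scope.

Section Homogenization.
Variables (R : realType) (V : lmodType R) (f M : V -> R).
Hypotheses (fD : forall u w, f (u + w) <= f u + f w)
  (fN : forall u, f (- u) = f u)
  (fZ : forall r u, f (r *: u) <= `|r| * M u).

Definition homog (v : V) : R := inf [set f (t *: v) / t | t in [set t | 0 < t]].

Lemma subadditive0 : f 0 = 0.
Proof.
have := fZ 0 0; rewrite scale0r normr0 mul0r => f0_le0.
by apply/eqP; rewrite eq_le f0_le0 /=; have := fD 0 0; rewrite addr0; lra.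
Qed.

Lemma subadditive_ge0 u : 0 <= f u.
Proof. by have := fD u (- u); rewrite subrr subadditive0 fN; lra. Qed.

Lemma bound_ge0 u : 0 <= M u.
Proof.
by have := fZ 1 u; rewrite normr1 mul1r scale1r; apply: le_trans; apply: subadditive_ge0.
Qed.

Lemma subadditive_natrZ n u : f (n%:R *: u) <= n%:R * f u.
Proof.
elim: n => [|n IHn]; first by rewrite scale0r mul0r subadditive0.
rewrite -addn1 natrD scalerDl mulrDl scale1r mul1r.
by apply: le_trans (fD _ _) _; rewrite lerD2r.
Qed.

Let homog_set_has_inf v : has_inf [set f (t *: v) / t | t in [set t | 0 < t]].
Proof.
split; first by exists (f (1 *: v) / 1), 1 => //=; rewrite ltr01.
exists 0 => _ [t /= t_gt0 <-]; exact: divr_ge0 (subadditive_ge0 _) (ltW t_gt0).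
Qed.

Lemma homog_le v t : 0 < t -> homog v <= f (t *: v) / t.
Proof. by move=> t_gt0; apply: ge_inf; [case: (homog_set_has_inf v) | exists t]. Qed.

Lemma homog_ge v x : (forall t, 0 < t -> x <= f (t *: v) / t) -> x <= homog v.
Proof.
move=> x_le; apply: lb_le_inf; first by case: (homog_set_has_inf v).
by move=> _ [t /= t_gt0 <-]; exact: x_le.
Qed.

Lemma homog_le_self v : homog v <= f v.
Proof. by have := @homog_le v 1 ltr01; rewrite scale1r divr1. Qed.

Lemma homog_le_bound v : homog v <= M v.
Proof.
by apply: le_trans (homog_le_self v) _; have := fZ 1 v; rewrite normr1 mul1r scale1r.
Qed.

Lemma homog_eq v c : (forall t, 0 < t -> f (t *: v) = t * c) -> homog v = c.
Proof.
move=> fv; have fv_div t : 0 < t -> f (t *: v) / t = c.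
  by move=> t_gt0; rewrite fv // [t * c]mulrC mulfK ?gt_eqF.
apply/eqP; rewrite eq_le; apply/andP; split.
  by rewrite -(fv_div 1 ltr01) homog_le.
by apply: homog_ge => t t_gt0; rewrite fv_div.
Qed.

Lemma homog_adherent v e : 0 < e -> exists2 s, 0 < s & f (s *: v) / s < homog v + e.
Proof.
move=> e_gt0; have [_ [s /= s_gt0 <-]] := inf_adherent e_gt0 (homog_set_has_inf v).
by exists s.
Qed.

(* Write t = n s + r with n = floor (t / s) and 0 <= r < s. *)
Lemma subadditive_scale_le v s t : 0 < s -> 0 <= t ->
  f (t *: v) <= t / s * f (s *: v) + s * M v.
Proof.
move=> s_gt0 t_ge0; set n := Num.truncn (t / s).
have /andP[n_le n_gt] := truncn_itv (divr_ge0 t_ge0 (ltW s_gt0)).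
rewrite -/n in n_le n_gt; set r := t - n%:R * s.
have r_ge0 : 0 <= r by rewrite subr_ge0 -ler_pdivlMr.
have r_le : r <= s.
  by rewrite /r lerBlDl -[X in _ + X]mul1r -mulrDl -ler_pdivrMr // natr1 ltW.
have -> : t *: v = n%:R *: (s *: v) + r *: v by rewrite scalerA -scalerDl subrKC.
apply: le_trans (fD _ _) _; apply: lerD.
  apply: le_trans (subadditive_natrZ _ _) _.
  by rewrite ler_wpM2r ?subadditive_ge0.
by apply: le_trans (fZ _ _) _; rewrite ger0_norm // ler_wpM2r ?bound_ge0.
Qed.

Lemma homog_near v e : 0 < e -> \forall t \near +oo, f (t *: v) / t <= homog v + e.
Proof.
move=> e_gt0; have e2_gt0 : 0 < e / 2 by rewrite divr_gt0.
have [s s_gt0 fs_lt] := homog_adherent v e2_gt0.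
near=> t.
have t_gt0 : 0 < t by near: t; apply: nbhs_pinfty_gt; rewrite num_real.
have sM_le : s * M v <= t * (e / 2).
  by rewrite -ler_pdivrMr //; near: t; apply: nbhs_pinfty_ge; rewrite num_real.
rewrite ler_pdivrMr //; apply: le_trans (subadditive_scale_le _ s_gt0 (ltW t_gt0)) _.
rewrite mulrAC -mulrA; move: fs_lt; set a := f (s *: v) / s => fs_lt.
have : t * a <= t * (homog v + e / 2) by rewrite ler_wpM2l ?ltW.
nra.
Unshelve. all: by end_near.
Qed.

Lemma homogD v w : homog (v + w) <= homog v + homog w.
Proof.
apply/ler_addgt0Pr => e e_gt0; have e2_gt0 : 0 < e / 2 by rewrite divr_gt0.
have [t [t_gt0 fv_le fw_le]] : exists t, [/\ 0 < t,
    f (t *: v) / t <= homog v + e / 2 & f (t *: w) / t <= homog w + e / 2].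
  apply: (@filter_ex _ +oo_R); near=> t; split.
  - by near: t; apply: nbhs_pinfty_gt; rewrite num_real.
  - by near: t; exact: homog_near.
  - by near: t; exact: homog_near.
apply: le_trans (homog_le _ t_gt0) _.
apply: le_trans (_ : (f (t *: v) + f (t *: w)) / t <= _).
  by rewrite ler_pM2r ?invr_gt0 // scalerDr fD.
rewrite mulrDl; lra.
Unshelve. all: by end_near.
Qed.

Lemma homogZ_le l v : l != 0 -> homog (l *: v) <= `|l| * homog v.
Proof.
move=> l_neq0; have l_gt0 : 0 < `|l| by rewrite normr_gt0.
rewrite mulrC -ler_pdivrMr //; apply: homog_ge => t t_gt0.
have tl_gt0 : 0 < t / `|l| by rewrite divr_gt0.
rewrite ler_pdivrMr //; apply: le_trans (homog_le _ tl_gt0) _.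
have -> : f ((t / `|l|) *: (l *: v)) = f (t *: v).
  rewrite scalerA -mulrA; case: (ltrgt0P l) l_neq0 => // l_sgn _.
    by rewrite mulVf ?gt_eqF // mulr1.
  by rewrite invrN mulNr mulVf ?lt_eqF // mulrN1 scaleNr fN.
by rewrite invf_div mulrA mulrAC.
Qed.

Lemma homogZ l v : homog (l *: v) = `|l| * homog v.
Proof.
have [->|l_neq0] := eqVneq l 0.
  by rewrite scale0r normr0 mul0r; apply: homog_eq => t _; rewrite scaler0 subadditive0 mulr0.
apply/eqP; rewrite eq_le homogZ_le //=.
have := @homogZ_le l^-1 (l *: v); rewrite invr_eq0 scalerA mulVf // scale1r normfV.
by move=> /(_ l_neq0); rewrite -ler_pdivlMl ?normr_gt0.
Qed.
End Homogenization.

Section MetricLinearSpace.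
Variables (R : realType) (Z : lmodType R) (d : Z -> Z -> R).
Hypothesis d_mls : metric_linear_space d.

Let dC x y : d x y = d y x. Proof. by case: d_mls. Qed.
Let d_triangle x y z : d x z <= d x y + d y z. Proof. by case: d_mls. Qed.
Let dD x y z : d (x + z) (y + z) = d x y. Proof. by case: d_mls. Qed.
Let dxx x : d x x = 0. Proof. by case: d_mls => d_eq0 *; apply/d_eq0. Qed.

Lemma dist_ge0 x y : 0 <= d x y.
Proof. by have := d_triangle x y x; rewrite dxx dC; lra. Qed.

Lemma dist_subr0 x y : d x y = d (x - y) 0.
Proof. by rewrite -(dD x y (- y)) subrr. Qed.

Lemma dist0D u w : d (u + w) 0 <= d u 0 + d w 0.
Proof. by apply: le_trans (d_triangle _ w _) _; rewrite -{2}[w]add0r dD. Qed.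

Lemma dist0N u : d (- u) 0 = d u 0.
Proof. by rewrite -(dD (- u) 0 u) addNr add0r dC. Qed.

End MetricLinearSpace.

Section LinIsometricInto.
Variables (R : realType) (X : normedModType R) (Z : lmodType R) (d : Z -> Z -> R)
  (J : X -> Z).
Hypothesis J_iso : lin_isometric_into d J.

Lemma isom_intoD x y : J (x + y) = J x + J y.
Proof. by have := J_iso.1 1 x y; rewrite !scale1r. Qed.

Lemma isom_into0 : J 0 = 0.
Proof. by have := isom_intoD 0 0; rewrite addr0 => /eqP; rewrite -subr_eq subrr eq_sym => /eqP. Qed.

Lemma isom_intoZ a x : J (a *: x) = a *: J x.
Proof. by rewrite -[a *: x]addr0 J_iso.1 isom_into0 addr0. Qed.

Lemma isom_intoN x : J (- x) = - J x.
Proof. by rewrite -[- x]scaleN1r isom_intoZ scaleN1r. Qed.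

Lemma isom_into_dist0 x : d (J x) 0 = `|x|.
Proof. by rewrite -isom_into0 J_iso.2 subr0. Qed.

End LinIsometricInto.

Section Renorming.
Variables (R : realType) (X Y : completeNormedModType R).

Record dominated_seminorm := DominatedSeminorm {
  seminorm :> X * Y -> R;
  seminormD : forall u v, seminorm (u + v) <= seminorm u + seminorm v;
  seminormZ : forall l u, seminorm (l *: u) = `|l| * seminorm u;
  seminorm_le : forall u, seminorm u <= `|u.1| + `|u.2| }.

(* A copy of X * Y indexed by p and delta, so that each choice carries its own
   canonical norm. *)
Definition renormed of dominated_seminorm & {posnum R} : Type := (X * Y)%type.

Variables (p : dominated_seminorm) (delta : {posnum R}).

HB.instance Definition _ := GRing.Lmodule.copy (renormed p delta) (X * Y)%type.

(* p may vanish on nonzero vectors; the second term turns it into a norm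
   equivalent to the product norm, without changing the norm of (x, 0) or (0, y)
   as long as delta <= 1. *)
Definition renormed_norm (v : renormed p delta) : R :=
  Num.max (p v) (delta%:num * Num.max `|v.1| `|v.2|).

Lemma renormed_normD (v w : renormed p delta) :
  renormed_norm (v + w) <= renormed_norm v + renormed_norm w.
Proof.
rewrite /renormed_norm ge_max; apply/andP; split.
  by apply: le_trans (seminormD _ _ _) _; apply: lerD; rewrite le_max lexx.
apply: le_trans (_ : delta%:num * Num.max `|v.1| `|v.2| +
    delta%:num * Num.max `|w.1| `|w.2| <= _); last by apply: lerD; rewrite le_max lexx orbT.
rewrite -mulrDr ler_wpM2l // ge_max; apply/andP; split.
  by apply: le_trans (ler_normD _ _) _; apply: lerD; rewrite le_max lexx.
by apply: le_trans (ler_normD _ _) _; apply: lerD; rewrite le_max lexx orbT.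
Qed.

Lemma renormed_normZ l (v : renormed p delta) :
  renormed_norm (l *: v) = `|l| * renormed_norm v.
Proof. by rewrite /renormed_norm seminormZ /= !normrZ -maxr_pMr // mulrCA -maxr_pMr. Qed.

Lemma renormed_norm_eq0 (v : renormed p delta) : renormed_norm v = 0 -> v = 0.
Proof.
move=> v0; have : delta%:num * Num.max `|v.1| `|v.2| <= 0 by rewrite -v0 le_max lexx orbT.
rewrite pmulr_rle0 // ge_max !normr_le0 => /andP[/eqP v1 /eqP v2].
by case: v v1 v2 {v0} => a b /= -> ->.
Qed.

HB.instance Definition _ :=
  Lmodule_isNormed.Build R (renormed p delta) renormed_normD renormed_normZ renormed_norm_eq0.

Lemma renormed_fst_le (v : renormed p delta) : delta%:num * `|v.1| <= `|v|.
Proof. by rewrite [`|v|]/(renormed_norm v) le_max ler_pM2l // le_max lexx !orbT. Qed.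

Lemma renormed_snd_le (v : renormed p delta) : delta%:num * `|v.2| <= `|v|.
Proof. by rewrite [`|v|]/(renormed_norm v) le_max ler_pM2l // le_max lexx !orbT. Qed.

Lemma renormed_le_sum (v : renormed p delta) :
  `|v| <= (1 + delta%:num) * (`|v.1| + `|v.2|).
Proof.
have sum_ge0 : 0 <= `|v.1| + `|v.2| by rewrite addr_ge0.
rewrite [`|v|]/(renormed_norm v) ge_max; apply/andP; split.
  by apply: le_trans (seminorm_le _ _) _; rewrite ler_peMl // lerDl.
rewrite mulrDl mul1r ler_wpDl // ler_wpM2l // ge_max.
by rewrite lerDl lerDr !normr_ge0.
Qed.

Lemma renormed_complete (F : set_system (renormed p delta)) :
  ProperFilter F -> cauchy F -> cvg F.
Proof.
move=> FF /cauchyP F_cauchy.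
have cvg_component (T : completeNormedModType R) (pi : renormed p delta -> T) :
    (forall v w, delta%:num * `|pi v - pi w| <= `|v - w|) -> cvg (pi @ F).
  move=> pi_le; apply/cauchy_cvgP/cauchy_exP => e e_gt0.
  have [w Fw] := F_cauchy _ (mulr_gt0 (gt0 delta) e_gt0).
  exists (pi w); rewrite /nbhs /=; apply: filterS Fw => v; rewrite -!ball_normE /ball_ /=.
  by move=> /(le_lt_trans (pi_le _ _)); rewrite ltr_pM2l.
have /fcvgrPdist_lt cvg1 := cvg_component _ fst (fun v w => renormed_fst_le (v - w)).
have /fcvgrPdist_lt cvg2 := cvg_component _ snd (fun v w => renormed_snd_le (v - w)).
apply/cvg_ex; exists ((lim (fst @ F), lim (snd @ F)) : renormed p delta).
apply/fcvgrPdist_lt => e e_gt0; set k := e / (2 * (1 + delta%:num)).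
have k_gt0 : 0 < k by rewrite divr_gt0 // mulr_gt0 // addr_gt0.
near=> v; apply: le_lt_trans (renormed_le_sum _) _.
have -> : e = (1 + delta%:num) * (k + k) by rewrite /k; field; rewrite lt0r_neq0 // addr_gt0.
rewrite ltr_pM2l ?addr_gt0 //; apply: ltrD.
  by near: v; exact: cvg1.
by near: v; exact: cvg2.
Unshelve. all: by end_near.
Qed.

HB.instance Definition _ := Uniform_isComplete.Build (renormed p delta) renormed_complete.

Lemma renormed_inl_isometry : delta%:num <= 1 -> (forall x, p (x, 0) = `|x|) ->
  lin_isometry (fun x : X => (x, 0) : renormed p delta).
Proof.
move=> delta_le1 p_inl; split=> [a x y|x].
  by apply/eqP; rewrite xpair_eqE /= scaler0 addr0 !eqxx.
rewrite [LHS]/(renormed_norm _) p_inl /= normr0 (max_l (normr_ge0 x)).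
by rewrite max_l // ler_piMl.
Qed.

Lemma renormed_inr_isometry : delta%:num <= 1 -> (forall y, p (0, y) = `|y|) ->
  lin_isometry (fun y : Y => (0, y) : renormed p delta).
Proof.
move=> delta_le1 p_inr; split=> [a x y|y].
  by apply/eqP; rewrite xpair_eqE /= scaler0 addr0 !eqxx.
rewrite [LHS]/(renormed_norm _) p_inr /= normr0 (max_r (normr_ge0 y)).
by rewrite max_l // ler_piMl.
Qed.

Lemma renormed_inl_sub_inr a b : `|a| <= 1 -> `|b| <= 1 ->
  `|((a, 0) : renormed p delta) - (0, b)| <= Num.max (p (a, - b)) delta%:num.
Proof.
move=> a_le1 b_le1; have -> : ((a, 0) : renormed p delta) - (0, b) = (a, - b).
  by apply/eqP; rewrite xpair_eqE /= subr0 sub0r !eqxx.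
rewrite [leLHS]/(renormed_norm _) /= normrN ge_max !le_max lexx /=.
by rewrite ler_piMr ?orbT // ge_max a_le1 b_le1.
Qed.

End Renorming.

Section JointSeminorm.
Variables (R : realType) (X Y : completeNormedModType R) (Z : lmodType R)
  (d : Z -> Z -> R) (JX : X -> Z) (JY : Y -> Z).
Hypotheses (d_mls : metric_linear_space d) (JX_iso : lin_isometric_into d JX)
  (JY_iso : lin_isometric_into d JY).

Definition joint_fnorm (v : X * Y) : R := d (JX v.1 + JY v.2) 0.

Lemma joint_fnormD u w : joint_fnorm (u + w) <= joint_fnorm u + joint_fnorm w.
Proof. by rewrite /joint_fnorm /= (isom_intoD JX_iso) (isom_intoD JY_iso) addrACA dist0D. Qed.

Lemma joint_fnormN u : joint_fnorm (- u) = joint_fnorm u.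
Proof.
by rewrite /joint_fnorm /= (isom_intoN JX_iso) (isom_intoN JY_iso) -opprD dist0N.
Qed.

Lemma joint_fnormZ r u : joint_fnorm (r *: u) <= `|r| * (`|u.1| + `|u.2|).
Proof.
rewrite /joint_fnorm /=; apply: le_trans (dist0D d_mls _ _) _.
by rewrite (isom_into_dist0 JX_iso) (isom_into_dist0 JY_iso) !normrZ mulrDr.
Qed.

Definition joint_seminorm : dominated_seminorm X Y :=
  DominatedSeminorm
    (homogD joint_fnormD joint_fnormN joint_fnormZ)
    (homogZ joint_fnormD joint_fnormN joint_fnormZ)
    (homog_le_bound joint_fnormD joint_fnormN joint_fnormZ).

Lemma joint_seminorm_inl x : joint_seminorm (x, 0) = `|x|.
Proof.
apply: (homog_eq joint_fnormD joint_fnormN joint_fnormZ) => t t_gt0.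
rewrite /joint_fnorm /= scaler0 (isom_into0 JY_iso) addr0 (isom_into_dist0 JX_iso).
by rewrite normrZ gtr0_norm.
Qed.

Lemma joint_seminorm_inr y : joint_seminorm (0, y) = `|y|.
Proof.
apply: (homog_eq joint_fnormD joint_fnormN joint_fnormZ) => t t_gt0.
rewrite /joint_fnorm /= scaler0 (isom_into0 JX_iso) add0r (isom_into_dist0 JY_iso).
by rewrite normrZ gtr0_norm.
Qed.

Lemma joint_seminorm_le_dist a b : joint_seminorm (a, - b) <= d (JX a) (JY b).
Proof.
apply: le_trans (homog_le_self joint_fnormD joint_fnormN joint_fnormZ _) _.
by rewrite /joint_fnorm /= (isom_intoN JY_iso) -(dist_subr0 d_mls).
Qed.

End JointSeminorm.

Lemma ereal_inf_image_le_addr (R : realType) (T : Type) (D1 D2 : T -> R) (B : set T) (e : R) :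
  (forall b, B b -> D1 b <= D2 b + e) ->
  (ereal_inf [set (D1 b)%:E | b in B] <= ereal_inf [set (D2 b)%:E | b in B] + e%:E)%E.
Proof.
move=> D12; rewrite -leeBlDr //; apply: le_ereal_inf_tmp => _ [b Bb <-].
rewrite leeBlDr //; apply: le_trans (ereal_inf_lbound _) _; first by exists b.
by rewrite -EFinD lee_fin D12.
Qed.

Lemma ereal_sup_inf_le_addr (R : realType) (A B : Type) (D1 D2 : A -> B -> R)
    (SA : set A) (SB : set B) (e : R) :
  (forall a b, SA a -> SB b -> D1 a b <= D2 a b + e) ->
  (ereal_sup [set ereal_inf [set (D1 a b)%:E | b in SB] | a in SA] <=
   ereal_sup [set ereal_inf [set (D2 a b)%:E | b in SB] | a in SA] + e%:E)%E.
Proof.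
move=> D12; apply: ge_ereal_sup => _ [a SAa <-].
apply: le_trans (ereal_inf_image_le_addr (D12 a ^~ SAa)) _.
by apply: leeD2r; apply: ereal_sup_ubound; exists a.
Qed.

Lemma hausdorff_image (R : realType) (A B T : Type) (d : T -> T -> R)
    (SA : set A) (SB : set B) (u : A -> T) (v : B -> T) :
  hausdorff d (u @` SA) (v @` SB) =
  maxe (ereal_sup [set ereal_inf [set (d (u a) (v b))%:E | b in SB] | a in SA])
       (ereal_sup [set ereal_inf [set (d (u a) (v b))%:E | a in SA] | b in SB]).
Proof.
rewrite /hausdorff !image_comp; congr (maxe (ereal_sup _) (ereal_sup _)).
  by apply: eq_imagel => a _; rewrite /= image_comp.
by apply: eq_imagel => b _; rewrite /= image_comp.
Qed.

Lemma hausdorff_image_le_addr (R : realType) (A B T1 T2 : Type)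
    (d1 : T1 -> T1 -> R) (d2 : T2 -> T2 -> R) (SA : set A) (SB : set B)
    (u1 : A -> T1) (v1 : B -> T1) (u2 : A -> T2) (v2 : B -> T2) (e : R) :
  (forall a b, SA a -> SB b -> d1 (u1 a) (v1 b) <= d2 (u2 a) (v2 b) + e) ->
  (hausdorff d1 (u1 @` SA) (v1 @` SB) <= hausdorff d2 (u2 @` SA) (v2 @` SB) + e%:E)%E.
Proof.
move=> d12; rewrite !hausdorff_image ge_max; apply/andP; split.
  apply: le_trans (ereal_sup_inf_le_addr d12) (leeD2r _ _).
  by rewrite le_max lexx.
apply: le_trans (ereal_sup_inf_le_addr (fun b a SBb SAa => d12 a b SAa SBb)) (leeD2r _ _).
by rewrite le_max lexx orbT.
Qed.

Theorem theorem2p5 (R : realType) (X Y : completeNormedModType R)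
    (Z : lmodType R) (d : Z -> Z -> R) (JX : X -> Z) (JY : Y -> Z) :
  metric_linear_space d ->
  lin_isometric_into d JX -> lin_isometric_into d JY ->
  (kadets_dist X Y <= hausdorff d (JX @` unit_ball X) (JY @` unit_ball Y))%E.
Proof.
move=> d_mls JX_iso JY_iso; apply/lee_addgt0Pr => e e_gt0.
have delta_gt0 : 0 < Num.min e 1 by rewrite lt_min e_gt0 ltr01.
pose delta : {posnum R} := PosNum delta_gt0.
have delta_le1 : delta%:num <= 1 by rewrite ge_min lexx orbT.
pose p := joint_seminorm d_mls JX_iso JY_iso.
pose U (x : X) : renormed p delta := (x, 0).
pose V (y : Y) : renormed p delta := (0, y).
apply: (@le_trans _ _ (hausdorff (fun w1 w2 => `|w1 - w2|) (U @` unit_ball X) (V @` unit_ball Y))).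
  apply: ereal_inf_lbound; exists (renormed p delta : completeNormedModType R), U, V.
  split; first exact: renormed_inl_isometry delta_le1 (joint_seminorm_inl _ _ JY_iso).
  by split; first exact: renormed_inr_isometry delta_le1 (joint_seminorm_inr _ JX_iso _).
apply: hausdorff_image_le_addr => a b a_le1 b_le1; rewrite /U /V.
apply: le_trans (renormed_inl_sub_inr p delta a_le1 b_le1) _; rewrite ge_max.
apply/andP; split.
  by apply: le_trans (joint_seminorm_le_dist _ _ _ a b) _; rewrite lerDl ltW.
by rewrite ge_min lerDr (dist_ge0 d_mls).
Qed.
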